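(* Let $r\ge 2$ and $n\ge1$ be integers, and for $k=0,1,\dots,n$ let $\boldsymbol{\lambda}_k=((n-k);(1^k);\emptyset;\dots;\emptyset)$. Then the number of standard $\boldsymbol{\lambda}_k$-tableaux is $\binom{n}{k}$, and every standard $\boldsymbol{\lambda}_k$-tableau has exactly $k$ descents.
   Context: An $r$-multipartition $\boldsymbol{\lambda}=(\lambda^{(0)};\dots;\lambda^{(r-1)})$ of $n$ is an $r$-tuple of partitions of total size $n$; here $\boldsymbol\lambda_k$ has a one-row component $(n-k)$ in position $0$, a one-column component $(1^k)$ in position $1$, and empty components otherwise. A standard $\boldsymbol{\lambda}$-tableau fills the boxes of all components with $1,\dots,n$, each once, increasing along rows and down columns in each component. An integer $i\in\{1,\dots,n-1\}$ is a descent of $\mathrm{T}$ if, with $i$ in row $a$ of component $c$ and $i+1$ in row $x$ of component $z$, either $c=z$ and $a<x$, or $c>z$; $n$ is a descent iff $n$ lies in a component $c>0$. *)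

From mathcomp Require Import all_boot.
Set Implicit Arguments. Unset Strict Implicit. Unset Printing Implicit Defensive.

(* An r-multipartition: a partition (list of row lengths, top row first)
   for each component c : 'I_r. *)
Definition multipartition (r : nat) := 'I_r -> seq nat.

(* A box (c, a, b): component c, row a, column b (rows/columns 0-indexed).
   For a multipartition of n every row and column index is < n. *)
Definition box (r n : nat) := ('I_r * 'I_n * 'I_n)%type.
Definition bcomp r n (x : box r n) : nat := x.1.1.
Definition brow  r n (x : box r n) : nat := x.1.2.
Definition bcol  r n (x : box r n) : nat := x.2.

Definition in_diagram r n (lam : multipartition r) (x : box r n) : bool :=
  bcol x < nth 0 (lam x.1.1) (brow x).

(* A tableau of size n: entry i : 'I_n stands for the integer i+1,
   and T i is the box it occupies. *)
Definition tableau (r n : nat) := {ffun 'I_n -> box r n}.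

Definition standard r n (lam : multipartition r) (T : tableau r n) : bool :=
  [&& injectiveb T,
      [forall i, in_diagram lam (T i)],
      [forall x : box r n, in_diagram lam x ==> [exists i, T i == x]],
      [forall i, forall j,
         ((bcomp (T i) == bcomp (T j)) && (brow (T i) == brow (T j))
            && (bcol (T i) < bcol (T j))) ==> (i < j)] &
      [forall i, forall j,
         ((bcomp (T i) == bcomp (T j)) && (bcol (T i) == bcol (T j))
            && (brow (T i) < brow (T j))) ==> (i < j)]].

Definition desc_pair r n (x y : box r n) : bool :=
  ((bcomp x == bcomp y) && (brow x < brow y)) || (bcomp y < bcomp x).

Definition is_descent r n (T : tableau r n) (i : 'I_n) : bool :=
  [exists j : 'I_n, (val j == i.+1) && desc_pair (T i) (T j)]
  || ((i.+1 == n) && (0 < bcomp (T i))).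

Definition descents r n (T : tableau r n) : {set 'I_n} :=
  [set i | is_descent T i].

Definition lamk (r n k : nat) : multipartition r :=
  fun c => if val c == 0 then [:: n - k]
           else if val c == 1 then nseq k 1 else [::].
Arguments lamk : clear implicits.

From mathcomp Require Import all_boot.
Set Implicit Arguments. Unset Strict Implicit. Unset Printing Implicit Defensive.

(* A standard lambda_k-tableau is determined by the set S of entries in its
   column (1^k): they fill the column from top to bottom in increasing order,
   so entry i sits in row rank S i, and the other entries fill the row (n-k)
   from left to right, entry i in column rank (~: S) i.  Conversely every
   k-subset S arises, which gives binomial(n, k) tableaux.  The descents are
   exactly the entries of S: after an entry of the column comes an entry lower
   in the column or one in the earlier component 0 (and n in the column is a
   descent by definition), while after an entry of the row comes an entry
   further right or one in the later component 1. *)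

Lemma card_onto_ltn (T : finType) (A : {pred T}) (h : T -> nat) m :
  {in A &, injective h} -> {in A, forall x, h x < m} ->
  (forall a, a < m -> exists2 x, x \in A & h x = a) -> #|A| = m.
Proof.
move=> h_inj h_lt h_onto.
have h_uniq : uniq (map h (enum A)).
  by rewrite map_inj_in_uniq ?enum_uniq // => x y; rewrite !mem_enum; apply: h_inj.
have h_img : map h (enum A) =i iota 0 m.
  move=> a; rewrite mem_iota add0n; apply/mapP/idP => [[x]|lt_am].
    by rewrite mem_enum => /h_lt lt_hm ->.
  by have [x xA <-] := h_onto a lt_am; exists x; rewrite ?mem_enum.
have /perm_size := uniq_perm h_uniq (iota_uniq 0 m) h_img.
by rewrite size_map size_iota -cardE.
Qed.

Section Rank.

Variable n : nat.
Implicit Types (A : {set 'I_n}) (i j : 'I_n).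

Lemma incr_inj_in (D : {pred 'I_n}) (f : 'I_n -> nat) :
  {in D &, forall i j, i < j -> f i < f j} -> {in D &, injective f}.
Proof.
move=> f_incr i j iD jD eq_f; apply/val_inj/eqP.
case: (ltngtP i j) => // [lt_ij|lt_ji].
  by have := f_incr i j iD jD lt_ij; rewrite eq_f ltnn.
by have := f_incr j i jD iD lt_ji; rewrite eq_f ltnn.
Qed.

Definition rank A i := #|[set j in A | j < i]|.

Lemma rank_leq A i : rank A i <= i.
Proof.
have card_lt : #|[set j : 'I_n | j < i]| = i.
  apply: card_onto_ltn => [? ? _ _|j|a lt_ai]; first exact: val_inj.
    by rewrite inE.
  by exists (Ordinal (ltn_trans lt_ai (ltn_ord i))); rewrite ?inE.
rewrite -[X in _ <= X]card_lt subset_leq_card //.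
by apply/subsetP => j; rewrite !inE => /andP[].
Qed.

Lemma leq_rank A i j : i <= j -> rank A i <= rank A j.
Proof.
move=> le_ij; apply: subset_leq_card; apply/subsetP => l.
by rewrite !inE => /andP[-> /leq_trans ->].
Qed.

Lemma rank_ltn A i j : i \in A -> i < j -> rank A i < rank A j.
Proof.
move=> iA lt_ij; apply: proper_card; apply/properP; split.
  by apply/subsetP => l; rewrite !inE => /andP[-> /ltn_trans ->].
by exists i; rewrite !inE ?iA ?lt_ij // ltnn andbF.
Qed.

Lemma ltn_rank A i j : i \in A -> (rank A i < rank A j) = (i < j).
Proof.
move=> iA; apply/idP/idP => [lt_r|]; last exact: rank_ltn.
by rewrite ltnNge; apply: contraL lt_r => /(leq_rank A); rewrite -ltnNge.
Qed.

Lemma rank_inj A : {in A &, injective (rank A)}.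
Proof. by apply: incr_inj_in => i j iA _; apply: rank_ltn. Qed.

Lemma rank_ltn_card A i : i \in A -> rank A i < #|A|.
Proof.
move=> iA; apply: proper_card; apply/properP; split.
  by apply/subsetP => j; rewrite inE => /andP[].
by exists i; rewrite ?inE ?iA // ltnn andbF.
Qed.

Lemma rank_onto A a : a < #|A| -> exists2 i, i \in A & rank A i = a.
Proof.
move=> lt_a; set s := map (rank A) (enum A).
have s_uniq : uniq s.
  by rewrite map_inj_in_uniq ?enum_uniq // => i j; rewrite !mem_enum; apply: rank_inj.
have s_sub : {subset s <= iota 0 #|A|}.
  by move=> b /mapP[i]; rewrite mem_enum mem_iota => iA ->; rewrite rank_ltn_card.
have s_size : size (iota 0 #|A|) <= size s by rewrite size_map size_iota -cardE.
have [_ s_img] := uniq_min_size s_uniq s_sub s_size.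
have /mapP[i] : a \in s by rewrite s_img mem_iota.
by rewrite mem_enum => iA ->; exists i.
Qed.

Lemma rank_unique A (h : 'I_n -> nat) :
    {in A &, forall i j, i < j -> h i < h j} ->
    (forall i a, i \in A -> a < h i -> exists2 j, j \in A & h j = a) ->
  {in A, h =1 rank A}.
Proof.
move=> h_incr h_down i iA; apply/esym/card_onto_ltn.
- apply: incr_inj_in => j j'; rewrite !inE => /andP[jA _] /andP[j'A _].
  exact: h_incr.
- by move=> j; rewrite inE => /andP[jA lt_ji]; apply: h_incr.
move=> a lt_a; have [j jA eq_a] := h_down i a iA lt_a.
exists j => //; rewrite inE jA /=.
case: (ltngtP j i) => // [lt_ij|/val_inj eq_ji].
  by have := h_incr i j iA jA lt_ij; rewrite eq_a => /(ltn_trans lt_a); rewrite ltnn.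
by move: lt_a; rewrite -eq_a eq_ji ltnn.
Qed.

Definition ord_rank A i : 'I_n := Ordinal (leq_ltn_trans (rank_leq A i) (ltn_ord i)).

End Rank.

Lemma eq_box r n (x y : box r n) :
  bcomp x = bcomp y -> brow x = brow y -> bcol x = bcol y -> x = y.
Proof.
case: x => [[c a] b]; case: y => [[c' a'] b'].
by rewrite /bcomp /brow /bcol /= => /val_inj-> /val_inj-> /val_inj->.
Qed.

Lemma is_descent_succ r n (T : tableau r n) (i j : 'I_n) :
  val j = i.+1 -> is_descent T i = desc_pair (T i) (T j).
Proof.
move=> jE; rewrite /is_descent -jE (ltn_eqF (ltn_ord j)) orbF.
apply/existsP/idP => [[l /andP[/eqP lE]]|]; last by exists j; rewrite eqxx.
by rewrite (_ : l = j) //; apply: val_inj; rewrite lE.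
Qed.

Lemma is_descent_last r n (T : tableau r n) (i : 'I_n) :
  i.+1 = n -> is_descent T i = (0 < bcomp (T i)).
Proof.
move=> iE; rewrite /is_descent iE eqxx orbC /=; case: ltnP => //= _.
by apply/existsP => -[j /andP[/eqP jE _]]; move: (ltn_ord j); rewrite jE ltnn.
Qed.

Lemma in_lamkE r n k (x : box r n) : in_diagram (lamk r n k) x =
  ((bcomp x == 0) && (brow x == 0) && (bcol x < n - k)) ||
  ((bcomp x == 1) && (brow x < k) && (bcol x == 0)).
Proof.
case: x => [[[[|[|c]] hc] [[|a] ha]] [b hb]];
  rewrite /in_diagram /lamk /bcomp /brow /bcol /=.
all: rewrite ?nth_nil ?nth_nseq ?andbF ?orbF //=.
all: by case: ifP => _; case: b hb => [|b] hb; rewrite ?andbF ?andbT.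
Qed.

Lemma in_lamkP r n k (x : box r n) : in_diagram (lamk r n k) x ->
  [/\ bcomp x = 0, brow x = 0 & bcol x < n - k] \/
  [/\ bcomp x = 1, brow x < k & bcol x = 0].
Proof.
by rewrite in_lamkE => /orP[/andP[/andP[/eqP-> /eqP->] ?]|/andP[/andP[/eqP-> ?] /eqP->]];
  [left|right].
Qed.

Section HookTableaux.

(* c0, c1 and o stand for 0, 1 : 'I_r and 0 : 'I_n, which have no closed form for abstract r, n. *)
Variables (r n k : nat) (c0 c1 : 'I_r) (o : 'I_n).
Hypotheses (c0E : val c0 = 0) (c1E : val c1 = 1) (oE : val o = 0).
Local Notation lam := (lamk r n k).
Implicit Types (S : {set 'I_n}) (i j : 'I_n) (T : tableau r n).

Definition column_entries T : {set 'I_n} := [set i | bcomp (T i) == 1].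

Definition hook_tableau S : tableau r n :=
  [ffun i => if i \in S then (c1, ord_rank S i, o) else (c0, o, ord_rank (~: S) i)].

Variant hook_box_spec S i : bool -> nat -> nat -> nat -> Prop :=
  | HookColumn of i \in S : hook_box_spec S i true 1 (rank S i) 0
  | HookRow of i \in ~: S : hook_box_spec S i false 0 0 (rank (~: S) i).

Lemma hook_boxP S i : hook_box_spec S i (i \in S)
  (bcomp (hook_tableau S i)) (brow (hook_tableau S i)) (bcol (hook_tableau S i)).
Proof.
rewrite ffunE; case: (boolP (i \in S)) => iS.
  by rewrite /bcomp /brow /bcol /= c1E oE; apply: HookColumn.
by rewrite /bcomp /brow /bcol /= c0E oE; apply: HookRow; rewrite inE.
Qed.

Lemma column_entries_hook S : column_entries (hook_tableau S) = S.
Proof. by apply/setP => i; rewrite inE; case: hook_boxP. Qed.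

Lemma standard_hook S : #|S| = k -> standard lam (hook_tableau S).
Proof.
move=> cardS; have cardCS : #|~: S| = n - k.
  by rewrite -cardS -[X in X - _](card_ord n) -(cardsC S) addKn.
apply/and5P; split.
- apply/injectiveP => i j eq_ij.
  have : (bcomp (hook_tableau S i), brow (hook_tableau S i), bcol (hook_tableau S i)) =
         (bcomp (hook_tableau S j), brow (hook_tableau S j), bcol (hook_tableau S j)).
    by rewrite eq_ij.
  by case: hook_boxP => iS; case: hook_boxP => jS //; case; apply: rank_inj.
- apply/forallP => i; rewrite in_lamkE.
  by case: hook_boxP => iS; rewrite /= -?cardCS -?cardS rank_ltn_card ?orbT.
- apply/forallP => x; apply/implyP => /in_lamkP[[c0x r0x ltx]|[c1x ltx c0x]].
  + rewrite -cardCS in ltx; have [i /[!inE] /negbTE iS rankE] := rank_onto ltx.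
    by apply/existsP; exists i; apply/eqP/eq_box; rewrite ?c0x ?r0x -?rankE;
      case: hook_boxP iS.
  + rewrite -cardS in ltx; have [i iS rankE] := rank_onto ltx.
    by apply/existsP; exists i; apply/eqP/eq_box; rewrite ?c1x ?c0x -?rankE;
      case: hook_boxP iS.
- apply/forallP => i; apply/forallP => j.
  by case: hook_boxP => iS; case: hook_boxP => jS //=;
    rewrite ?ltnn ?andbF // ltn_rank ?implybb.
- apply/forallP => i; apply/forallP => j.
  by case: hook_boxP => iS; case: hook_boxP => jS //=;
    rewrite ?ltnn ?andbF // ltn_rank ?implybb.
Qed.

Section StandardTableau.

Variable T : tableau r n.
Hypothesis stT : standard lam T.

Lemma standard_inj : injective T.
Proof. by case/and5P: stT => /injectiveP. Qed.

Lemma standard_in_lamk i : in_diagram lam (T i).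
Proof. by case/and5P: stT => _ /forallP. Qed.

Lemma standard_onto x : in_diagram lam x -> exists i, T i = x.
Proof.
by case/and5P: stT => _ _ /forallP/(_ x)/implyP cover _ _ /cover/existsP[i /eqP]; exists i.
Qed.

Lemma standard_row i j : bcomp (T i) = bcomp (T j) -> brow (T i) = brow (T j) ->
  i < j -> bcol (T i) < bcol (T j).
Proof.
move=> eq_c eq_r lt_ij; case/and5P: stT => _ _ _ /forallP/(_ j)/forallP/(_ i) incr _.
case: (ltngtP (bcol (T i)) (bcol (T j))) => // [lt_ji|eq_col].
  by move: incr; rewrite eq_c eq_r !eqxx lt_ji ltnNge (ltnW lt_ij).
by move: lt_ij; rewrite (standard_inj (eq_box eq_c eq_r eq_col)) ltnn.
Qed.

Lemma standard_col i j : bcomp (T i) = bcomp (T j) -> bcol (T i) = bcol (T j) ->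
  i < j -> brow (T i) < brow (T j).
Proof.
move=> eq_c eq_col lt_ij; case/and5P: stT => _ _ _ _ /forallP/(_ j)/forallP/(_ i) incr.
case: (ltngtP (brow (T i)) (brow (T j))) => // [lt_ji|eq_r].
  by move: incr; rewrite eq_c eq_col !eqxx lt_ji ltnNge (ltnW lt_ij).
by move: lt_ij; rewrite (standard_inj (eq_box eq_c eq_r eq_col)) ltnn.
Qed.

Lemma standard_column_box i : i \in column_entries T ->
  [/\ bcomp (T i) = 1, brow (T i) < k & bcol (T i) = 0].
Proof.
rewrite inE => /eqP c1i; case: (in_lamkP (standard_in_lamk i)) => [[c0i _ _]|//].
by rewrite c1i in c0i.
Qed.

Lemma standard_row_box i : i \notin column_entries T ->
  [/\ bcomp (T i) = 0, brow (T i) = 0 & bcol (T i) < n - k].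
Proof.
rewrite inE => c1i; case: (in_lamkP (standard_in_lamk i)) => [//|[c1i' _ _]].
by rewrite c1i' in c1i.
Qed.

Lemma standard_column_onto a : a < k -> a < n ->
  exists2 i, i \in column_entries T & brow (T i) = a.
Proof.
move=> lt_ak lt_an; pose x : box r n := (c1, Ordinal lt_an, o).
have [|i Ti] := @standard_onto x.
  by rewrite in_lamkE /bcomp /brow /bcol /= c1E oE lt_ak.
by exists i; rewrite ?inE Ti /bcomp /brow /= ?c1E.
Qed.

Lemma standard_row_onto a : a < n - k ->
  exists2 i, i \notin column_entries T & bcol (T i) = a.
Proof.
move=> lt_a; pose x : box r n := (c0, o, Ordinal (leq_trans lt_a (leq_subr k n))).
have [|i Ti] := @standard_onto x.
  by rewrite in_lamkE /bcomp /brow /bcol /= c0E oE lt_a.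
by exists i; rewrite ?inE Ti /bcomp /bcol /= ?c0E.
Qed.

Lemma standard_brow :
  {in column_entries T, forall i, brow (T i) = rank (column_entries T) i}.
Proof.
apply: rank_unique => [i j iC jC lt_ij|i a iC lt_a].
  have [c1i _ c0i] := standard_column_box iC; have [c1j _ c0j] := standard_column_box jC.
  by apply: standard_col; rewrite ?c1i ?c1j ?c0i ?c0j.
have [_ lt_ik _] := standard_column_box iC.
exact: standard_column_onto (ltn_trans lt_a lt_ik) (ltn_trans lt_a (ltn_ord _)).
Qed.

Lemma standard_bcol :
  {in ~: column_entries T, forall i, bcol (T i) = rank (~: column_entries T) i}.
Proof.
apply: rank_unique => [i j /[!in_setC] iC jC lt_ij|i a /[!in_setC] iC lt_a].
  have [c0i r0i _] := standard_row_box iC; have [c0j r0j _] := standard_row_box jC.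
  by apply: standard_row; rewrite ?c0i ?c0j ?r0i ?r0j.
have [_ _ lt_ink] := standard_row_box iC.
have [j jC <-] := standard_row_onto (ltn_trans lt_a lt_ink).
by exists j; rewrite ?in_setC.
Qed.

Lemma hook_tableau_column_entries : hook_tableau (column_entries T) = T.
Proof.
apply/ffunP => i; set h := hook_tableau _ i.
suff [] : (bcomp h, brow h, bcol h) = (bcomp (T i), brow (T i), bcol (T i)) by apply: eq_box.
case: hook_boxP => [iC|/[!in_setC] iC].
  by have [-> _ ->] := standard_column_box iC; rewrite standard_brow.
by have [-> -> _] := standard_row_box iC; rewrite standard_bcol ?in_setC.
Qed.

Lemma card_column_entries : k <= n -> #|column_entries T| = k.
Proof.
move=> le_kn; apply: (@card_onto_ltn _ _ (fun i => brow (T i))).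
- move=> i j iC jC /=; rewrite !standard_brow //; exact: rank_inj.
- by move=> i /standard_column_box[].
by move=> a lt_ak; apply: standard_column_onto (leq_trans lt_ak le_kn).
Qed.

Lemma standard_desc_pair i j :
  val j = i.+1 -> desc_pair (T i) (T j) = (i \in column_entries T).
Proof.
move=> jE; have lt_ij : i < j by rewrite jE.
rewrite /desc_pair; case: (boolP (i \in column_entries T)) => iC;
  case: (boolP (j \in column_entries T)) => jC.
- have [c1i _ c0i] := standard_column_box iC; have [c1j _ c0j] := standard_column_box jC.
  by rewrite c1i c1j standard_col ?c1i ?c1j ?c0i ?c0j.
- have [-> _ _] := standard_column_box iC.
  by have [-> _ _] := standard_row_box jC; rewrite orbT.
- by have [-> _ _] := standard_row_box iC; have [-> _ _] := standard_column_box jC.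
by have [-> -> _] := standard_row_box iC; have [-> -> _] := standard_row_box jC.
Qed.

Lemma descents_standard : descents T = column_entries T.
Proof.
apply/setP => i; rewrite [i \in descents T]inE.
case: (ltnP i.+1 n) => [lt_in|le_ni].
  by rewrite (@is_descent_succ _ _ _ _ (Ordinal lt_in)) // standard_desc_pair.
rewrite is_descent_last; last by apply/anti_leq; rewrite le_ni ltn_ord.
case: (boolP (i \in column_entries T)) => iC.
  by have [-> _ _] := standard_column_box iC.
by have [-> _ _] := standard_row_box iC.
Qed.

End StandardTableau.

End HookTableaux.

Theorem mainTheorem3 (r n : nat) (hr : 2 <= r) (hn : 1 <= n) (k : nat) (hk : k <= n) :
  #|[set T : tableau r n | standard (lamk r n k) T]| = 'C(n, k) /\
  (forall T : tableau r n, standard (lamk r n k) T -> #|descents T| = k).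
Proof.
pose c0 : 'I_r := Ordinal (ltnW hr); pose c1 : 'I_r := Ordinal hr.
pose o : 'I_n := Ordinal hn.
have c0E : val c0 = 0 by []; have c1E : val c1 = 1 by []; have oE : val o = 0 by [].
split; last first.
  by move=> T stT; rewrite (descents_standard stT) (card_column_entries c1E oE stT hk).
have -> : [set T | standard (lamk r n k) T] =
          hook_tableau c0 c1 o @: [set S : {set 'I_n} | #|S| == k].
  apply/setP => T; rewrite inE; apply/idP/imsetP => [stT|[S /[!inE] /eqP cardS ->]].
    exists (column_entries T); first by rewrite inE (card_column_entries c1E oE stT hk).
    by rewrite (hook_tableau_column_entries c0E c1E oE stT).
  exact: standard_hook.
rewrite card_in_imset ?card_draws ?card_ord // => S1 S2 _ _ eqS.
by rewrite -(column_entries_hook c0E c1E oE S1) eqS column_entries_hook.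
Qed.
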